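(* For $n \ge 3$, the commutator subgroup $TW_n'$ is generated by the elements $$w\,(\tau_j\tau_{j+1}\tau_j\tau_{j+1})\,w^{-1} \quad\text{and}\quad w\,(\tau_{j+1}\tau_j\tau_{j+1}\tau_j)\,w^{-1},$$ where $j$ ranges over $\{1,2,\dots,n-2\}$ and $w$ ranges over all products $w=\tau_{i_1}\tau_{i_2}\cdots\tau_{i_s}$ with $s\ge 0$ and $1 \le i_1 < i_2 < \dots < i_s < j$ (the empty product $w=1$ included).
   Context: For $n \ge 2$, the twin group $TW_n$ is the group with generators $\tau_1,\dots,\tau_{n-1}$ and defining relations $\tau_i^2=1$ for all $i$, and $\tau_i\tau_j=\tau_j\tau_i$ whenever $|i-j|>1$. $G'$ denotes the commutator subgroup of a group $G$. *)

(* The twin group TW_n is modelled by its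
   presentation: words in the generators tau_1..tau_{n-1} (a word is a
   seq nat of indices) modulo the congruence generated by the defining
   relations. Subgroups are described by membership of words. *)
From mathcomp Require Import all_boot.
Set Implicit Arguments. Unset Strict Implicit. Unset Printing Implicit Defensive.

Definition word := seq nat.

Definition valid_word (n : nat) (w : word) : bool := all (fun i => (0 < i < n)%N) w.

Inductive tw_eq (n : nat) : word -> word -> Prop :=
| tw_refl w : tw_eq n w w
| tw_sym u v : tw_eq n u v -> tw_eq n v u
| tw_trans u v w : tw_eq n u v -> tw_eq n v w -> tw_eq n u w
| tw_ctx x y a b : tw_eq n a b -> tw_eq n (x ++ a ++ y) (x ++ b ++ y)
| tw_sq i : (0 < i < n)%N -> tw_eq n [:: i; i] [::]
| tw_comm i j : (0 < i < n)%N -> (0 < j < n)%N -> (i.+1 < j)%N ->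
    tw_eq n [:: i; j] [:: j; i].

(* inverse of a word: since each tau_i is an involution, the reversed word *)
Definition winv (w : word) : word := rev w.

Definition in_gen (n : nat) (S : word -> Prop) (u : word) : Prop :=
  exists ws : seq word,
    (forall x, x \in ws -> S x \/ S (winv x)) /\ tw_eq n u (flatten ws).

Definition commutator_word (n : nat) (c : word) : Prop :=
  exists x y : word, [/\ valid_word n x, valid_word n y &
    c = winv x ++ winv y ++ x ++ y].

Definition in_TW_comm (n : nat) (u : word) : Prop :=
  in_gen n (commutator_word n) u.

Definition lemma_gen (n : nat) (g : word) : Prop :=
  exists (j : nat) (w : word),
    [/\ (0 < j)%N, (j <= n - 2)%N,
        sorted ltn w, all (fun i => (0 < i < j)%N) w &
        g = w ++ [:: j; j.+1; j; j.+1] ++ winv w \/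
        g = w ++ [:: j.+1; j; j.+1; j] ++ winv w].

(* Each generator lies in TW_n': w tau_j tau_(j+1) tau_j tau_(j+1) w^-1 is the commutator of
   the involutions w tau_j w^-1 and w tau_(j+1) w^-1.  Conversely, already the generators
   whose conjugator is a run w = tau_k tau_(k+1) ... tau_(j-1) of consecutive letters generate
   a normal subgroup H: conjugating one of them by a letter tau_i gives, according to the
   position of i relative to k and j, a product of at most three such generators or their
   inverses.  The commutator of two letters is trivial or (tau_l tau_(l+1))^(+-2), hence in H,
   and [ab, c] = b^-1 [a, c] b [b, c] then puts every commutator in H. *)

From mathcomp Require Import all_boot zify.
From Stdlib Require Import Setoid Morphisms.
Set Implicit Arguments. Unset Strict Implicit. Unset Printing Implicit Defensive.

Definition far (i j : nat) : bool := (i.+1 < j) || (j.+1 < i).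

Definition quad (j : nat) : word := [:: j; j.+1; j; j.+1].

Definition commutator (x y : word) : word := rev x ++ rev y ++ x ++ y.

Ltac solve_letters :=
  rewrite /valid_word /far /=;
  repeat match goal with
  | |- is_true (all _ _) => apply/allP => ? ? /=
  | |- is_true (allrel _ _ _) => apply/allrelP => ? ? ? ? /=
  | H : is_true (_ \in rev _) |- _ => rewrite mem_rev in H
  | H : is_true (_ \in iota _ _) |- _ => rewrite mem_iota in H
  | H : is_true (_ \in _ ++ _) |- _ => rewrite mem_cat in H; case/orP: H => H
  | H : is_true (_ \in _ :: _) |- _ => rewrite in_cons in H; case/orP: H => H
  | H : is_true (_ \in [::]) |- _ => by rewrite in_nil in H
  | H : is_true (_ == _) |- _ => move/eqP: H => H
  end; lia.

#[local] Hint Resolve tw_refl : core.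

Section TwinRelations.
Variable n : nat.
Local Notation "u ~~ v" := (tw_eq n u v) (at level 70).

Global Instance tw_eq_Equivalence : Equivalence (tw_eq n).
Proof. split; [exact: tw_refl | exact: tw_sym | exact: tw_trans]. Qed.

Lemma tw_eq_catl x a b : a ~~ b -> x ++ a ~~ x ++ b.
Proof. by move=> eq_ab; have := tw_ctx x [::] eq_ab; rewrite !cats0. Qed.

Global Instance cat_tw_eq_Proper : Proper (tw_eq n ==> tw_eq n ==> tw_eq n) (@cat nat).
Proof.
by move=> a b eq_ab c d eq_cd; apply: tw_trans (tw_ctx [::] c eq_ab) (tw_eq_catl b eq_cd).
Qed.

Global Instance cons_tw_eq_Proper : Proper (eq ==> tw_eq n ==> tw_eq n) (@cons nat).
Proof. by move=> i _ <- a b; apply: (tw_eq_catl [:: i]). Qed.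

Lemma tw_eq_rev u v : u ~~ v -> rev u ~~ rev v.
Proof.
elim=> {u v} [u | u v _ IH | u v w _ IHuv _ IHvw | x y a b _ IH | i ltin
             | i j ltin ltjn far_ij].
- reflexivity.
- by symmetry.
- by rewrite IHuv.
- by rewrite !rev_cat IH.
- exact: tw_sq.
- by rewrite /=; symmetry; apply: tw_comm.
Qed.

Lemma tw_sqK i s : 0 < i < n -> i :: i :: s ~~ s.
Proof. by move=> ltin; apply: (tw_ctx [::] s (tw_sq ltin)). Qed.

Lemma tw_catsqK i s : 0 < i < n -> s ++ [:: i; i] ~~ s.
Proof. by move=> ltin; have := tw_eq_catl s (tw_sq ltin); rewrite cats0. Qed.

Lemma tw_swap i j s : 0 < i < n -> 0 < j < n -> far i j ->
  i :: j :: s ~~ j :: i :: s.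
Proof.
move=> ltin ltjn /orP[lt_ij | lt_ji]; first exact: (tw_ctx [::] s (tw_comm ltin ltjn lt_ij)).
by symmetry; apply: (tw_ctx [::] s (tw_comm ltjn ltin lt_ji)).
Qed.

Lemma tw_commute_letter i r s : 0 < i < n -> valid_word n r -> all (far i) r ->
  i :: r ++ s ~~ r ++ i :: s.
Proof.
move=> ltin; elim: r => [|a r IH] //= /andP[ltan valid_r] /andP[far_ia far_ir].
by rewrite tw_swap // IH.
Qed.

Lemma tw_commute r t s : valid_word n r -> valid_word n t -> allrel far r t ->
  r ++ t ++ s ~~ t ++ r ++ s.
Proof.
move=> + valid_t; elim: r => [|a r IH] //= /andP[ltan valid_r].
rewrite allrel_consl => /andP[far_at far_rt].
by rewrite IH // tw_commute_letter.
Qed.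

Lemma tw_commute_cat r t : valid_word n r -> valid_word n t -> allrel far r t ->
  r ++ t ~~ t ++ r.
Proof. by move=> *; rewrite -[r ++ t]cats0 -catA tw_commute // cats0. Qed.

Lemma tw_revK r s : valid_word n r -> rev r ++ r ++ s ~~ s.
Proof.
elim: r s => [|a r IH] s //= /andP[ltan valid_r].
by rewrite rev_cons -cats1 -catA /= tw_sqK // IH.
Qed.

Lemma tw_Krev r s : valid_word n r -> r ++ rev r ++ s ~~ s.
Proof. by move=> valid_r; rewrite -{1}(revK r) tw_revK // /valid_word all_rev. Qed.

End TwinRelations.

Arguments tw_commute_letter {n} i r s.
Arguments tw_commute {n} r t s.
Arguments tw_commute_cat {n} r t.
Arguments tw_revK {n} r s.
Arguments tw_Krev {n} r s.

Section GeneratedSubgroup.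
Variables (n : nat) (S : word -> Prop).
Local Notation "u ~~ v" := (tw_eq n u v) (at level 70).
Local Notation G := (in_gen n S).

Lemma in_gen_nil : G [::].
Proof. by exists [::]. Qed.

Lemma in_gen_gen u : S u -> G u.
Proof.
by move=> Su; exists [:: u]; rewrite /= cats0; split=> // x /[1!inE] /eqP->; left.
Qed.

Lemma in_gen_cat u v : G u -> G v -> G (u ++ v).
Proof.
move=> [us [Sus eq_u]] [vs [Svs eq_v]]; exists (us ++ vs); split.
- by move=> x /[1!mem_cat] /orP[]; [apply: Sus | apply: Svs].
- by rewrite flatten_cat eq_u eq_v.
Qed.

Lemma in_gen_rev u : G u -> G (rev u).
Proof.
move=> [us [Sus eq_u]]; exists (rev (map rev us)); split.
- move=> x /[1!mem_rev] /mapP[y /Sus Sy ->]; rewrite /winv revK.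
  by case: Sy; [right | left].
- by rewrite -rev_flatten; apply: tw_eq_rev.
Qed.

Lemma in_gen_tw_eq u v : u ~~ v -> G v -> G u.
Proof. by move=> eq_uv [vs [Svs eq_v]]; exists vs; split=> //; rewrite eq_uv. Qed.

End GeneratedSubgroup.

Lemma in_gen_sub n (S T : word -> Prop) u : (forall x, S x -> in_gen n T x) ->
  in_gen n S u -> in_gen n T u.
Proof.
move=> sub_ST [us [Sus eq_u]]; apply: in_gen_tw_eq eq_u _.
elim: us Sus => [|x us IH] Sus /=; first exact: in_gen_nil.
apply: in_gen_cat; last by apply: IH => y us_y; apply: Sus; rewrite inE us_y orbT.
case: (Sus x (mem_head _ _)) => [/sub_ST // | /sub_ST /in_gen_rev].
by rewrite /winv revK.
Qed.

Section NormalSubgroup.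
Variables (n : nat) (S : word -> Prop).
Local Notation "u ~~ v" := (tw_eq n u v) (at level 70).
Local Notation G := (in_gen n S).

Hypothesis in_gen_conj_gen : forall i g, 0 < i < n -> S g -> G (i :: g ++ [:: i]).

Lemma in_gen_conj_letter i u : 0 < i < n -> G u -> G (i :: u ++ [:: i]).
Proof.
move=> ltin [us [Sus eq_u]]; apply: (@in_gen_tw_eq _ _ _ (i :: flatten us ++ [:: i])).
  by rewrite eq_u.
elim: us Sus {eq_u} => [|x us IH] Sus /=.
  by apply: in_gen_tw_eq (in_gen_nil _ _); apply: tw_sq.
have eq_split : i :: (x ++ flatten us) ++ [:: i]
    ~~ (i :: x ++ [:: i]) ++ (i :: flatten us ++ [:: i]).
  by rewrite /= -!catA /= tw_sqK.
apply: in_gen_tw_eq eq_split _; apply: in_gen_cat.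
  case: (Sus x (mem_head _ _)) => [/(in_gen_conj_gen ltin) // |].
  move=> /(in_gen_conj_gen ltin) /in_gen_rev.
  by rewrite rev_cons -cats1 rev_cat /winv revK.
by apply: IH => y us_y; apply: Sus; rewrite inE us_y orbT.
Qed.

Lemma in_gen_conj w u : valid_word n w -> G u -> G (rev w ++ u ++ w).
Proof.
elim: w u => [|a w IH] u /=; first by rewrite cats0.
move=> /andP[ltan valid_w] /(in_gen_conj_letter ltan) /(IH _ valid_w).
by rewrite rev_cons -cats1 -!catA /= -!catA.
Qed.

(* [ab, c] = b^-1 [a, c] b [b, c] *)
Lemma in_gen_commutator_catl a b c : valid_word n b -> valid_word n c ->
  G (commutator a c) -> G (commutator b c) -> G (commutator (a ++ b) c).
Proof.
move=> valid_b valid_c /(in_gen_conj valid_b) Gac /(in_gen_cat Gac).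
apply: in_gen_tw_eq; rewrite /commutator !rev_cat -!catA.
by rewrite (tw_Krev b (rev c ++ b ++ c)) // (tw_Krev c (b ++ c)).
Qed.

Lemma in_gen_commutator_letterwise x c : valid_word n x -> valid_word n c ->
  (forall a, a \in x -> G (commutator [:: a] c)) -> G (commutator x c).
Proof.
move=> + valid_c; elim: x => [_ _ | a x IH /= /andP[ltan valid_x] Gxc].
  by apply: in_gen_tw_eq (in_gen_nil _ _); have := tw_revK c [::] valid_c; rewrite cats0.
apply: (in_gen_commutator_catl (a := [:: a])) => //; first exact/Gxc/mem_head.
by apply: IH => // y x_y; apply: Gxc; rewrite inE x_y orbT.
Qed.

Lemma rev_commutator x y : rev (commutator x y) = commutator y x.
Proof. by rewrite /commutator !rev_cat !revK -!catA. Qed.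

Lemma in_gen_commutator x y : valid_word n x -> valid_word n y ->
  (forall i j, 0 < i < n -> 0 < j < n -> G (commutator [:: i] [:: j])) ->
  G (commutator x y).
Proof.
move=> valid_x valid_y G_letters.
apply: in_gen_commutator_letterwise => // i x_i.
rewrite -rev_commutator; apply: in_gen_rev.
apply: in_gen_commutator_letterwise => // [|j y_j]; first by rewrite /= (allP valid_x).
by apply: G_letters; [apply: (allP valid_y) | apply: (allP valid_x)].
Qed.

End NormalSubgroup.

Section TwinConjugation.
Variable n : nat.
Local Notation "u ~~ v" := (tw_eq n u v) (at level 70).

Lemma tw_conj_far i u : 0 < i < n -> valid_word n u -> all (far i) u ->
  i :: u ++ [:: i] ~~ u.
Proof. by move=> ltin valid_u far_iu; rewrite tw_commute_letter // tw_catsqK. Qed.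

Lemma tw_conj_inner h q X : 0 < h -> h.+1 < n ->
  valid_word n q -> valid_word n X -> all (far h.+1) q -> all (far h) X ->
  allrel far q X ->
  h.+1 :: q ++ h :: h.+1 :: X ++ h.+1 :: h :: rev q ++ [:: h.+1]
  ~~ q ++ h.+1 :: h :: h.+1 :: h :: rev q ++ X ++ q ++ h :: h.+1 :: h :: h.+1 :: rev q.
Proof.
move=> lt0h lthn valid_q valid_X far_q far_X far_qX.
have lt_h1n : 0 < h.+1 < n by lia.
have lt_hn : 0 < h < n by lia.
have valid_revq : valid_word n (rev q) by rewrite /valid_word all_rev.
rewrite (tw_commute_letter h.+1 q) //.
rewrite -(tw_commute_letter h.+1 (rev q) [::]) ?all_rev //.
rewrite cats0 (tw_commute (rev q) X) ?allrel_revl //.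
by rewrite tw_revK // (tw_commute_letter h X) // tw_sqK.
Qed.

End TwinConjugation.

Definition run_gen (n : nat) (g : word) : Prop := exists k m,
  [/\ 0 < k, (k + m).+2 <= n & g = iota k m ++ quad (k + m) ++ rev (iota k m)].

Section RunGenerators.
Variable n : nat.
Local Notation R := (in_gen n (run_gen n)).

Lemma run_gen_in k m j : 0 < k -> j = k + m -> j.+2 <= n ->
  R (iota k m ++ quad j ++ rev (iota k m)).
Proof. by move=> lt0k -> ltjn; apply: in_gen_gen; exists k, m. Qed.

Lemma run_gen_inv_in k m j : 0 < k -> j = k + m -> j.+2 <= n ->
  R (iota k m ++ rev (quad j) ++ rev (iota k m)).
Proof.
move=> lt0k def_j ltjn; have := in_gen_rev (run_gen_in lt0k def_j ltjn).
by rewrite !rev_cat revK catA.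
Qed.

Lemma quad_in j : 0 < j -> j.+2 <= n -> R (quad j).
Proof. by move=> lt0j ltjn; apply: (@run_gen_in j 0 j); rewrite ?addn0. Qed.

Lemma run_conj_far k m j i : 0 < k -> j = k + m -> j.+2 <= n -> 0 < i < n ->
  (i.+1 < k) || (j.+2 < i) ->
  R (i :: (iota k m ++ quad j ++ rev (iota k m)) ++ [:: i]).
Proof.
move=> lt0k def_j ltjn ltin far_i; apply: in_gen_tw_eq (run_gen_in lt0k def_j ltjn).
apply: tw_conj_far => //; rewrite /quad; solve_letters.
Qed.

Lemma run_conj_below m j i : 0 < i -> j = i.+1 + m -> j.+2 <= n ->
  R (i :: (iota i.+1 m ++ quad j ++ rev (iota i.+1 m)) ++ [:: i]).
Proof.
move=> lt0i def_j ltjn.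
have -> : i :: (iota i.+1 m ++ quad j ++ rev (iota i.+1 m)) ++ [:: i]
    = iota i m.+1 ++ quad j ++ rev (iota i m.+1).
  by rewrite /= rev_cons -cats1 -!catA.
by apply: run_gen_in; rewrite // def_j addSnnS.
Qed.

Lemma run_conj_first m j i : 0 < i -> j = i + m -> j.+2 <= n ->
  R (i :: (iota i m ++ quad j ++ rev (iota i m)) ++ [:: i]).
Proof.
move=> lt0i def_j ltjn; have ltin : 0 < i < n by lia.
case: m def_j => [|m] def_j.
  apply: in_gen_tw_eq (run_gen_inv_in lt0i def_j ltjn).
  by rewrite def_j addn0 /quad /= tw_sqK.
apply: in_gen_tw_eq (@run_gen_in i.+1 m j _ _ ltjn) => //; last by rewrite def_j addSnnS.
by rewrite [iota i _]/= rev_cons -cats1 -!catA cat_cons tw_sqK // cat1s !catA tw_catsqK.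
Qed.

Lemma run_conj_quad_high k m j : 0 < k -> j = k + m -> j.+2 <= n ->
  R (j.+1 :: (iota k m ++ quad j ++ rev (iota k m)) ++ [:: j.+1]).
Proof.
move=> lt0k def_j ltjn; apply: in_gen_tw_eq (run_gen_inv_in lt0k def_j ltjn).
rewrite -!catA /= (tw_commute_letter j.+1 (iota k m)); try solve_letters.
rewrite -(tw_commute_letter j.+1 (rev (iota k m)) [::]); try solve_letters.
by rewrite cats0 tw_sqK.
Qed.

Lemma run_conj_quad_low k m h : 0 < k -> h = k + m -> h.+3 <= n ->
  R (h.+1 :: (iota k m.+1 ++ quad h.+1 ++ rev (iota k m.+1)) ++ [:: h.+1]).
Proof.
move=> lt0k def_h lthn.
apply: in_gen_tw_eq (in_gen_cat (in_gen_cat (run_gen_inv_in lt0k def_h _)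
  (@run_gen_inv_in k m.+1 h.+1 lt0k _ _)) (run_gen_in lt0k def_h _)); try lia.
have -> : iota k m.+1 = iota k m ++ [:: h] by rewrite -addn1 iotaD def_h.
rewrite /quad !rev_cat -!catA /= !tw_revK; try solve_letters.
rewrite (tw_commute_letter h.+1 (iota k m)); try solve_letters.
rewrite -(tw_commute_letter h.+1 (rev (iota k m)) [::]); try solve_letters.
by rewrite cats0 !tw_sqK //; lia.
Qed.

Lemma run_conj_quad_above k m j : 0 < k -> j = k + m -> j.+3 <= n ->
  R (j.+2 :: (iota k m ++ quad j ++ rev (iota k m)) ++ [:: j.+2]).
Proof.
move=> lt0k def_j ltjn.
apply: in_gen_tw_eq (in_gen_cat (in_gen_cat (@run_gen_inv_in k m.+1 j.+1 lt0k _ _)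
  (run_gen_in lt0k def_j _)) (@quad_in j.+1 _ _)); try lia.
have -> : iota k m.+1 = iota k m ++ [:: j] by rewrite -addn1 iotaD def_j.
rewrite /quad !rev_cat -!catA /= tw_revK; try solve_letters.
rewrite (tw_commute_letter j.+2 (iota k m)); try solve_letters.
rewrite -(tw_commute_letter j.+2 (rev (iota k m)) [::]); try solve_letters.
rewrite cats0 /= (tw_commute_cat (rev (iota k m))); try solve_letters.
rewrite !tw_sqK; try lia.
rewrite (tw_swap (i := j) (j := j.+2)); try solve_letters.
by rewrite (tw_swap (i := j) (j := j.+2)) ?tw_sqK //; solve_letters.
Qed.

Lemma run_conj_inner k m j h : 0 < k -> j = k + m -> j.+2 <= n -> k <= h -> h.+2 <= j ->
  R (h.+1 :: (iota k m ++ quad j ++ rev (iota k m)) ++ [:: h.+1]).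
Proof.
move=> lt0k def_j ltjn lekh lthj.
set q := iota k (h - k); set r := iota h.+2 (j - h.+2); set X := r ++ quad j ++ rev r.
have split_run : iota k m = q ++ h :: h.+1 :: r.
  by rewrite [m](_ : m = h - k + (j - h.+2).+2) ?iotaD ?subnKC //; lia.
apply: in_gen_tw_eq (in_gen_cat (in_gen_cat (@run_gen_inv_in k (h - k) h lt0k _ _)
  (@run_gen_in h.+2 (j - h.+2) j _ _ _)) (@run_gen_in k (h - k) h lt0k _ _)); try lia.
have -> : h.+1 :: (iota k m ++ quad j ++ rev (iota k m)) ++ [:: h.+1]
    = h.+1 :: q ++ h :: h.+1 :: X ++ h.+1 :: h :: rev q ++ [:: h.+1].
  by rewrite split_run /X !rev_cat !rev_cons -!cats1 -!catA.
apply: (tw_trans (tw_conj_inner (X := X) _ _ _ _ _ _ _)); last by rewrite -!catA.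
all: rewrite /q /X /r /quad; solve_letters.
Qed.

Lemma run_gen_conj i g : 0 < i < n -> run_gen n g -> R (i :: g ++ [:: i]).
Proof.
move=> ltin [k [m [lt0k ltjn ->]]]; set j := k + m in ltjn *.
have def_j : j = k + m by [].
clearbody j.
have : [|| (i.+1 < k) || (j.+2 < i), i.+1 == k, i == k, k < i < j,
          (k < i) && (i == j), i == j.+1 | i == j.+2] by lia.
case/or4P=> [far_i | /eqP def_k | /eqP def_i
            | /or4P[/andP[ltki ltij] | /andP[ltkj /eqP def_i] | /eqP-> | /eqP def_i]].
- exact: run_conj_far.
- by subst k; apply: run_conj_below => //; lia.
- by subst i; apply: run_conj_first.
- have -> : i = i.-1.+1 by lia.
  by apply: run_conj_inner => //; lia.
- subst i; case: m def_j => [|m] def_j; first lia.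
  by rewrite def_j addnS; apply: run_conj_quad_low => //; lia.
- exact: run_conj_quad_high.
- by subst i; apply: run_conj_quad_above => //; lia.
Qed.

End RunGenerators.

Lemma commutator_letters_in n i l : 0 < i < n -> 0 < l < n ->
  in_gen n (run_gen n) (commutator [:: i] [:: l]).
Proof.
move=> ltin ltln; rewrite /commutator /=.
have [-> | ne_il] := eqVneq i l.
  by apply: in_gen_tw_eq (in_gen_nil _ _); rewrite !tw_sqK.
have [def_l | ne_l] := eqVneq l i.+1.
  by rewrite def_l; apply: quad_in; lia.
have [def_i | ne_i] := eqVneq i l.+1.
  by rewrite def_i; apply: (in_gen_rev (quad_in _ _)); lia.
apply: in_gen_tw_eq (in_gen_nil _ _).
by rewrite (tw_swap (i := i) (j := l)) ?tw_sqK //; rewrite /far; lia.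
Qed.

Lemma run_gen_lemma_gen n g : run_gen n g -> lemma_gen n g.
Proof.
move=> [k [m [lt0k ltjn ->]]]; exists (k + m), (iota k m); split; try lia.
- exact: iota_ltn_sorted.
- by apply/allP => x; rewrite mem_iota; lia.
- by left.
Qed.

Lemma lemma_gen_commutator n g : lemma_gen n g -> in_TW_comm n g.
Proof.
move=> [j [w [lt0j ltjn _ w_lt_j def_g]]].
have valid_w : valid_word n w by apply: sub_all w_lt_j => x; lia.
have quad_comm : in_TW_comm n (w ++ quad j ++ rev w).
  apply: (@in_gen_tw_eq _ _ _ (commutator (w ++ j :: rev w) (w ++ j.+1 :: rev w))).
    rewrite /commutator !rev_cat !rev_cons !revK -!cats1 -!catA /=.
    by rewrite !tw_revK.
  apply: in_gen_gen; exists (w ++ j :: rev w), (w ++ j.+1 :: rev w).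
  by split; rewrite // /valid_word all_cat /= all_rev; apply/and3P; split => //; lia.
case: def_g => ->; first exact: quad_comm.
by have := in_gen_rev quad_comm; rewrite !rev_cat revK -catA.
Qed.

Theorem lemma2p1 (n : nat) : (3 <= n)%N ->
  forall u : word, valid_word n u ->
    (in_TW_comm n u <-> in_gen n (lemma_gen n) u).
Proof.
move=> _ u _; split.
- apply: in_gen_sub => _ [x [y [valid_x valid_y ->]]].
  apply: (in_gen_sub (S := run_gen n)) => [g /run_gen_lemma_gen /in_gen_gen // |].
  apply: in_gen_commutator => //; first exact: run_gen_conj.
  exact: commutator_letters_in.
- by apply: in_gen_sub => g /lemma_gen_commutator.
Qed.
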